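(* Assume parts (i), (iv), (v) of Assumption (S), $\ell\ge2$, and $\ell h\,(L_{f;\mathsf{x}}+g_{\max}^2L_{\mathsf{sc},*})\le1$. For $k\in\{1,\dots,T/h\}$ let $\Phi_k:\mathbb{R}^d\to\mathbb{R}^d$ be the one-step sampler map $\widetilde{x}_{kh}\mapsto\widetilde{x}_{(k-1)h}$. Then there is an absolute constant $C$ such that for every $k$ the map $x\mapsto(\Phi_k(x)-x)/h$ is $C\,(L_{f;\mathsf{x}}+g_{\max}^2L_{\mathsf{sc},T-kh})$-Lipschitz. (Equivalently, the drift $\mu'_{T-kh}(x)=(\Phi_k(x)-x)/h$ of the time-reversed interpolated sampler is $O(L_{f;\mathsf{x}}+g_{\max}^2L_{\mathsf{sc},T-kh})$-Lipschitz.)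
   Context: Forward process: $dx_t=f_t(x_t)\,dt+g(t)\,dW_t$ on $\mathbb{R}^d$ with $g(t)>0$; $q_t$ is the law of $x_t$ (smooth positive density), $T>0$, $q^\leftarrow_t\triangleq q_{T-t}$. Assumption (S) parts: (i) $f_t(x)$ is $L_{f;\mathsf{x}}$-Lipschitz in $x$; (iv) $g(t)\le g_{\max}$; (v) $\nabla\ln q^\leftarrow_t$ is $L_{\mathsf{sc},t}$-Lipschitz, $L_{\mathsf{sc},*}=\sup_tL_{\mathsf{sc},t}$. Restoration operator: $R_{t\to s}(x)\triangleq x-(t-s)f_t(x)+(t-s)g(t)^2\nabla\ln q_t(x)$. Degradation operator: $D^\gamma_{s\to t}(x)\triangleq x+(t-s)f_s(x)+g(s)\sqrt{t-s}\,\gamma$. Sampler step (with $h>0$, $T/h\in\mathbb{N}$, $\ell\in\mathbb{N}$): for $k\ge\ell$, $\Phi_k(x)=D^\gamma_{(k-\ell)h\to(k-1)h}(z)$ where $z=R_{kh\to(k-\ell)h}(x)$ and $\gamma=(x-z-\ell hf_{(k-\ell)h}(z))/(g((k-\ell)h)\sqrt{\ell h})$; for $k<\ell$, $\Phi_k(x)=x-h(f_{kh}(x)-\tfrac12g(kh)^2\nabla\ln q_{kh}(x))$. *)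

From HB Require Import structures.
From mathcomp Require Import all_boot all_order all_algebra.
From mathcomp Require Import all_classical all_reals all_analysis.
Set Implicit Arguments. Unset Strict Implicit. Unset Printing Implicit Defensive.
Import Order.TTheory GRing.Theory Num.Theory.
Import numFieldNormedType.Exports.
Local Open Scope ring_scope.

Section Defs.
Variables (R : realType) (d : nat).

Definition eucl_norm (v : 'rV[R]_d) : R := Num.sqrt (\sum_(i < d) (v 0 i) ^+ 2).

Definition lip_eucl (F : 'rV[R]_d -> 'rV[R]_d) (L : R) : Prop :=
  forall x y, eucl_norm (F x - F y) <= L * eucl_norm (x - y).

Definition score_fn (q : R -> 'rV[R]_d -> R) (t : R) (x : 'rV[R]_d) : 'rV[R]_d :=
  \row_(i < d) 'D_(delta_mx 0 i) (fun y => ln (q t y)) x.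

Definition restoration (f : R -> 'rV[R]_d -> 'rV[R]_d) (g : R -> R)
  (q : R -> 'rV[R]_d -> R) (t s : R) (x : 'rV[R]_d) : 'rV[R]_d :=
  x - (t - s) *: f t x + ((t - s) * g t ^+ 2) *: score_fn q t x.

Definition degradation (f : R -> 'rV[R]_d -> 'rV[R]_d) (g : R -> R)
  (s t : R) (gam x : 'rV[R]_d) : 'rV[R]_d :=
  x + (t - s) *: f s x + (g s * Num.sqrt (t - s)) *: gam.

Definition sampler_step (f : R -> 'rV[R]_d -> 'rV[R]_d) (g : R -> R)
  (q : R -> 'rV[R]_d -> R) (h : R) (ell k : nat) (x : 'rV[R]_d) : 'rV[R]_d :=
  if (ell <= k)%N then
    let s := (k - ell)%:R * h in
    let z := restoration f g q (k%:R * h) s x in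
    let gam := (g s * Num.sqrt (ell%:R * h))^-1 *: (x - z - (ell%:R * h) *: f s z) in
    degradation f g s ((k - 1)%:R * h) gam z
  else
    x - h *: (f (k%:R * h) x - (2^-1 * g (k%:R * h) ^+ 2) *: score_fn q (k%:R * h) x).

End Defs.

From HB Require Import structures.
From mathcomp Require Import all_boot all_order all_algebra.
From mathcomp Require Import all_classical all_reals all_analysis.
From mathcomp Require Import ring lra.
Set Implicit Arguments. Unset Strict Implicit. Unset Printing Implicit Defensive.
Import Order.TTheory GRing.Theory Num.Theory.
Import numFieldNormedType.Exports.
Local Open Scope ring_scope.

(* For ell <= k, write z = R(x) and c = sqrt((ell-1)/ell).  Unfolding the
   degradation with the noise gamma read off from z, the drift
   (Phi_k(x) - x)/h equals
     (1 - c) ell (g^2 score - f)(x) + (ell - 1 - c ell) f_s(z),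
   and both coefficients lie in [-1, 1] because c^2 ell = ell - 1.  The first
   term is (Lf + g^2 Lsc)-Lipschitz, the second Lf (1 + ell h (Lf + g^2 Lsc))-
   Lipschitz, and the step-size condition makes the latter at most 2 Lf.  For
   k < ell the step is an Euler step of the probability-flow ODE, whose drift
   is directly (Lf + g^2 Lsc)-Lipschitz.  Hence C = 3 works. *)

Section EuclNorm.
Variables (R : realType) (d : nat).
Implicit Types (u v : 'rV[R]_d).

Lemma eucl_norm_ge0 v : 0 <= eucl_norm v.
Proof. exact: sqrtr_ge0. Qed.

Lemma sum_sqr_ge0 v : 0 <= \sum_(i < d) (v 0 i) ^+ 2.
Proof. by apply: sumr_ge0 => i _; exact: sqr_ge0. Qed.

Lemma sqr_eucl_norm v : eucl_norm v ^+ 2 = \sum_(i < d) (v 0 i) ^+ 2.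
Proof. by rewrite /eucl_norm sqr_sqrtr // sum_sqr_ge0. Qed.

Lemma eucl_norm_eq0 v : eucl_norm v = 0 -> v = 0.
Proof.
move=> /eqP; rewrite sqrtr_eq0 => hle.
have h0 : \sum_(i < d) (v 0 i) ^+ 2 = 0 by apply/le_anti; rewrite hle sum_sqr_ge0.
apply/rowP => i; rewrite mxE.
have := psumr_eq0P (fun i _ => sqr_ge0 (v 0 i)) h0 (i:=i) isT.
by move/eqP; rewrite sqrf_eq0 => /eqP.
Qed.

Lemma eucl_normZ (a : R) v : eucl_norm (a *: v) = `|a| * eucl_norm v.
Proof.
rewrite /eucl_norm.
have -> : \sum_(i < d) ((a *: v) 0 i) ^+ 2 = a ^+ 2 * \sum_(i < d) (v 0 i) ^+ 2.
  by rewrite mulr_sumr; apply: eq_bigr => i _; rewrite mxE exprMn.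
by rewrite sqrtrM ?sqr_ge0 // sqrtr_sqr.
Qed.

Lemma eucl_norm0 : eucl_norm (0 : 'rV[R]_d) = 0.
Proof. by rewrite -(scale0r (0 : 'rV[R]_d)) eucl_normZ normr0 mul0r. Qed.

Lemma eucl_norm_dot_le u v :
  \sum_(i < d) (u 0 i * v 0 i) <= eucl_norm u * eucl_norm v.
Proof.
set a := eucl_norm u; set c := eucl_norm v.
have [/eucl_norm_eq0 ->|a0] := eqVneq a 0.
  by rewrite big1 ?mulr_ge0 ?eucl_norm_ge0 // => i _; rewrite mxE mul0r.
have [/eucl_norm_eq0 ->|c0] := eqVneq c 0.
  by rewrite big1 ?mulr_ge0 ?eucl_norm_ge0 // => i _; rewrite mxE mulr0.
have ap : 0 < a by rewrite lt_def a0 eucl_norm_ge0.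
have cp : 0 < c by rewrite lt_def c0 eucl_norm_ge0.
have key : 2 * a * c * \sum_(i < d) (u 0 i * v 0 i) <=
    c ^+ 2 * \sum_(i < d) (u 0 i) ^+ 2 + a ^+ 2 * \sum_(i < d) (v 0 i) ^+ 2.
  rewrite !mulr_sumr -big_split /=; apply: ler_sum => i _.
  have := sqr_ge0 (c * u 0 i - a * v 0 i); nra.
move: key; rewrite -!sqr_eucl_norm -/a -/c => key.
have acp : 0 < a * c by apply: mulr_gt0.
nra.
Qed.

Lemma eucl_normD u v : eucl_norm (u + v) <= eucl_norm u + eucl_norm v.
Proof.
have sq : eucl_norm (u + v) ^+ 2 <= (eucl_norm u + eucl_norm v) ^+ 2.
  rewrite sqr_eucl_norm sqrrD !sqr_eucl_norm -mulr_natr.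
  have -> : \sum_(i < d) ((u + v) 0 i) ^+ 2 = \sum_(i < d) (u 0 i) ^+ 2
      + 2 * \sum_(i < d) (u 0 i * v 0 i) + \sum_(i < d) (v 0 i) ^+ 2.
    rewrite mulr_sumr -!big_split /=; apply: eq_bigr => i _.
    by rewrite mxE; ring.
  have := eucl_norm_dot_le u v; lra.
have := eucl_norm_ge0 (u + v); have := eucl_norm_ge0 u.
have := eucl_norm_ge0 v; nra.
Qed.

Lemma eucl_normB u v : eucl_norm (u - v) <= eucl_norm u + eucl_norm v.
Proof.
by have := eucl_normD u (- v); rewrite -scaleN1r eucl_normZ normrN normr1 mul1r.
Qed.

End EuclNorm.

Section LipEucl.
Variables (R : realType) (d : nat).
Implicit Types (F G : 'rV[R]_d -> 'rV[R]_d) (L M : R).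

Lemma eq_lip_eucl F G L : F =1 G -> lip_eucl F L -> lip_eucl G L.
Proof. by move=> eFG HF x y; rewrite -!eFG. Qed.

Lemma lip_eucl_le F L M : L <= M -> lip_eucl F L -> lip_eucl F M.
Proof.
by move=> LM HF x y; apply: le_trans (HF x y) _; rewrite ler_wpM2r ?eucl_norm_ge0.
Qed.

Lemma lip_eucl_ge0 F L (x y : 'rV[R]_d) : x != y -> lip_eucl F L -> 0 <= L.
Proof.
move=> xy HF.
have np : 0 < eucl_norm (x - y).
  rewrite lt_def eucl_norm_ge0 andbT; apply/eqP => /eucl_norm_eq0/eqP.
  by rewrite subr_eq0; exact/negP.
by rewrite -(pmulr_lge0 _ np); apply: le_trans (HF x y); exact: eucl_norm_ge0.
Qed.

Lemma lip_eucl_id : lip_eucl (@id 'rV[R]_d) 1.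
Proof. by move=> x y; rewrite mul1r. Qed.

Lemma lip_euclZ (a : R) F L :
  lip_eucl F L -> lip_eucl (fun x => a *: F x) (`|a| * L).
Proof.
move=> HF x y; rewrite -scalerBr eucl_normZ -mulrA.
by apply: ler_wpM2l; [exact: normr_ge0 | exact: HF].
Qed.

Lemma lip_euclD F G L M :
  lip_eucl F L -> lip_eucl G M -> lip_eucl (fun x => F x + G x) (L + M).
Proof.
move=> HF HG x y.
have -> : F x + G x - (F y + G y) = (F x - F y) + (G x - G y) by rewrite addrACA opprD.
by rewrite mulrDl; apply: le_trans (eucl_normD _ _) _; exact: lerD.
Qed.

Lemma lip_euclB F G L M :
  lip_eucl F L -> lip_eucl G M -> lip_eucl (fun x => F x - G x) (L + M).
Proof.
move=> HF HG x y.
have -> : F x - G x - (F y - G y) = (F x - F y) - (G x - G y).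
  by rewrite !opprD !opprK addrACA.
by rewrite mulrDl; apply: le_trans (eucl_normB _ _) _; exact: lerD.
Qed.

Lemma lip_eucl_comp F G L M :
  0 <= L -> lip_eucl F L -> lip_eucl G M -> lip_eucl (F \o G) (L * M).
Proof.
move=> L0 HF HG x y; apply: le_trans (HF _ _) _.
by rewrite -mulrA; apply: ler_wpM2l.
Qed.

End LipEucl.

Section SamplerDrift.
Variables (R : realType) (d : nat) (f : R -> 'rV[R]_d -> 'rV[R]_d) (g : R -> R)
  (q : R -> 'rV[R]_d -> R).

Definition reverse_drift (t : R) (x : 'rV[R]_d) : 'rV[R]_d :=
  g t ^+ 2 *: score_fn q t x - f t x.

Lemma restorationE t s :
  restoration f g q t s =1 fun x => x + (t - s) *: reverse_drift t x.
Proof. by move=> x; apply/rowP => i; rewrite !mxE; ring. Qed.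

Lemma sampler_step_drift_restore (h c : R) (ell k : nat) :
  (2 <= ell <= k)%N -> 0 < h -> g ((k - ell)%:R * h) != 0 ->
  c = Num.sqrt ((ell%:R - 1) * h) / Num.sqrt (ell%:R * h) ->
  (fun x => h^-1 *: (sampler_step f g q h ell k x - x)) =1
  fun x => ((1 - c) * ell%:R) *: reverse_drift (k%:R * h) x
    + (ell%:R - 1 - c * ell%:R) *:
        f ((k - ell)%:R * h) (restoration f g q (k%:R * h) ((k - ell)%:R * h) x).
Proof.
move=> /andP[ell2 ellk] hp gs0 -> x.
have ell1 : (1 <= ell)%N by exact: leq_trans ell2.
have sq0 : Num.sqrt (ell%:R * h) != 0.
  by rewrite sqrtr_eq0 -ltNge mulr_gt0 // ltr0n (leq_trans _ ell2).
have ers : (k - 1)%:R * h - (k - ell)%:R * h = (ell%:R - 1) * h.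
  by rewrite !natrB // ?(leq_trans ell1 ellk) //; ring.
have ets : k%:R * h - (k - ell)%:R * h = ell%:R * h by rewrite natrB //; ring.
rewrite /sampler_step ellk /degradation /= !restorationE ets ers.
apply/rowP => i; rewrite /reverse_drift !mxE; field.
by rewrite sq0 gs0 gt_eqF.
Qed.

Lemma sampler_step_drift_euler (h : R) (ell k : nat) :
  (k < ell)%N -> 0 < h ->
  (fun x => h^-1 *: (sampler_step f g q h ell k x - x)) =1
  fun x => (2^-1 * g (k%:R * h) ^+ 2) *: score_fn q (k%:R * h) x - f (k%:R * h) x.
Proof.
move=> kell hp x; rewrite /sampler_step leqNgt kell /=.
by apply/rowP => i; rewrite !mxE; field; rewrite gt_eqF.
Qed.

Lemma drift_coef_bounds (l c : R) :
  1 <= l -> 0 <= c -> c ^+ 2 * l = l - 1 ->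
  0 <= (1 - c) * l <= 1 /\ `|l - 1 - c * l| <= 1.
Proof.
move=> l1 c0 cl.
have l0 : 0 < l by lra.
have c2 : c ^+ 2 <= 1 by rewrite -(ler_pM2r l0) mul1r cl; lra.
have c1 : c <= 1 by nra.
have ccl : c ^+ 2 * l <= c * l by rewrite expr2 -mulrA ler_piMl ?mulr_ge0 // ltW.
have cll : c * l <= l by rewrite ler_piMl // ltW.
split; first by apply/andP; split; nra.
by rewrite ler_norml; apply/andP; split; lra.
Qed.

Variables (Lf Ls gmax : R).
Hypotheses (Lf0 : 0 <= Lf) (Ls0 : 0 <= Ls).

Lemma lip_reverse_drift t :
  lip_eucl (f t) Lf -> lip_eucl (score_fn q t) Ls ->
  lip_eucl (reverse_drift t) (Lf + g t ^+ 2 * Ls).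
Proof.
move=> Hf HS; rewrite addrC.
have := lip_euclB (lip_euclZ (g t ^+ 2) HS) Hf.
by rewrite ger0_norm ?sqr_ge0.
Qed.

Lemma lip_restoration t s :
  0 <= t - s -> lip_eucl (f t) Lf -> lip_eucl (score_fn q t) Ls ->
  lip_eucl (restoration f g q t s) (1 + (t - s) * (Lf + g t ^+ 2 * Ls)).
Proof.
move=> ts Hf HS; apply: eq_lip_eucl (fsym (restorationE t s)) _.
have := lip_euclD (@lip_eucl_id R d) (lip_euclZ (t - s) (lip_reverse_drift Hf HS)).
by rewrite ger0_norm.
Qed.

Let Kmax := Lf + gmax ^+ 2 * Ls.

Lemma le_reverse_drift_const t :
  0 <= g t <= gmax -> 0 <= Lf + g t ^+ 2 * Ls <= Kmax.
Proof.
move=> /andP[g0 ggm]; have gg : g t ^+ 2 <= gmax ^+ 2 by rewrite lerXn2r ?nnegrE //; lra.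
by rewrite addr_ge0 ?mulr_ge0 ?sqr_ge0 //= lerD2l ler_wpM2r.
Qed.

Lemma lip_sampler_drift_restore (h : R) (ell k : nat) :
  let t := k%:R * h in let s := (k - ell)%:R * h in
  (2 <= ell <= k)%N -> 0 < h -> 0 < g s -> 0 <= g t <= gmax ->
  ell%:R * h * Kmax <= 1 ->
  lip_eucl (f t) Lf -> lip_eucl (f s) Lf -> lip_eucl (score_fn q t) Ls ->
  lip_eucl (fun x => h^-1 *: (sampler_step f g q h ell k x - x)) (3 * Kmax).
Proof.
move=> t s hk hp gs ggm hstep Hft Hfs HS.
have /andP[ell2 ellk] := hk.
set l : R := ell%:R.
have l1 : 1 <= l by rewrite ler1n (leq_trans _ ell2).
have lh : 0 < l * h by rewrite mulr_gt0 // (lt_le_trans ltr01).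
set c := Num.sqrt ((l - 1) * h) / Num.sqrt (l * h).
have c0 : 0 <= c by rewrite divr_ge0 ?sqrtr_ge0.
have cl : c ^+ 2 * l = l - 1.
  rewrite /c expr_div_n !sqr_sqrtr ?(ltW lh) ?mulr_ge0 ?subr_ge0 ?(ltW hp) //.
  by field; rewrite !gt_eqF // (lt_le_trans ltr01).
have [/andP[a0 a1] b1] := drift_coef_bounds l1 c0 cl.
apply: eq_lip_eucl (fsym (sampler_step_drift_restore hk hp (lt0r_neq0 gs) (erefl c))) _.
have ets : t - s = l * h by rewrite /t /s natrB //; ring.
have ts0 : 0 <= t - s by rewrite ets ltW.
have := lip_euclD (lip_euclZ ((1 - c) * l) (lip_reverse_drift Hft HS))
  (lip_euclZ (l - 1 - c * l) (lip_eucl_comp Lf0 Hfs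
    (lip_restoration ts0 Hft HS))).
apply: lip_eucl_le; rewrite ets (ger0_norm a0).
have /andP[K0 KK] := le_reverse_drift_const ggm.
set K := Lf + g t ^+ 2 * Ls in K0 KK *.
have LfK : Lf <= Kmax by rewrite /Kmax lerDl mulr_ge0 ?sqr_ge0.
have lhK : l * h * K <= 1 by apply: le_trans hstep; rewrite ler_wpM2l // ltW.
have drift_part : (1 - c) * l * K <= Kmax by apply: le_trans KK; rewrite ler_piMl.
have compose_part : `|l - 1 - c * l| * (Lf * (1 + l * h * K)) <= 2 * Kmax.
  apply: le_trans (_ : Lf * 2 <= _); last by rewrite mulrC ler_wpM2l.
  apply: le_trans (_ : 1 * (Lf * (1 + l * h * K)) <= _).
    by rewrite ler_wpM2r // mulr_ge0 // addr_ge0 // mulr_ge0 // ltW.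
  by rewrite mul1r ler_wpM2l //; lra.
lra.
Qed.

Lemma lip_sampler_drift_euler (h : R) (ell k : nat) :
  let t := k%:R * h in
  (k < ell)%N -> 0 < h -> 0 <= g t <= gmax ->
  lip_eucl (f t) Lf -> lip_eucl (score_fn q t) Ls ->
  lip_eucl (fun x => h^-1 *: (sampler_step f g q h ell k x - x)) (3 * Kmax).
Proof.
move=> t kell hp ggm Hf HS.
apply: eq_lip_eucl (fsym (sampler_step_drift_euler kell hp)) _.
have := lip_euclB (lip_euclZ (2^-1 * g t ^+ 2) HS) Hf.
apply: lip_eucl_le.
have /andP[K0 KK] := le_reverse_drift_const ggm.
have half : `|2^-1 * g t ^+ 2| * Ls <= g t ^+ 2 * Ls.
  rewrite ger0_norm; last by rewrite mulr_ge0 ?invr_ge0 ?sqr_ge0.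
  by apply: ler_wpM2r => //; have := sqr_ge0 (g t); lra.
lra.
Qed.

End SamplerDrift.

Theorem mainTheorem11 (R : realType) :
  exists C : R,
  forall (d : nat) (f : R -> 'rV[R]_d -> 'rV[R]_d) (g : R -> R)
    (q : R -> 'rV[R]_d -> R) (T h : R) (N ell : nat)
    (Lf gmax Lstar : R) (Lsc : R -> R),
    0 < h -> 0 < T -> T = N%:R * h ->
    (* (i) *)
    (forall t, 0 <= t <= T -> lip_eucl (f t) Lf) ->
    (* g > 0 and (iv) *)
    (forall t, 0 <= t <= T -> 0 < g t) ->
    (forall t, 0 <= t <= T -> g t <= gmax) ->
    (* q_t smooth positive density (positivity, differentiability) *)
    (forall t x, 0 <= t <= T -> 0 < q t x) ->
    (forall t x, 0 <= t <= T -> differentiable (q t) x) ->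
    (* (v): grad ln q^<-_t = grad ln q_{T-t} is Lsc t - Lipschitz, Lstar >= sup Lsc *)
    (forall t, 0 <= t <= T -> lip_eucl (score_fn q (T - t)) (Lsc t)) ->
    (forall t, 0 <= t <= T -> Lsc t <= Lstar) ->
    (2 <= ell)%N ->
    ell%:R * h * (Lf + gmax ^+ 2 * Lstar) <= 1 ->
    forall k : nat, (1 <= k <= N)%N ->
      lip_eucl (fun x => h^-1 *: (sampler_step f g q h ell k x - x))
        (C * (Lf + gmax ^+ 2 * Lsc (T - k%:R * h))).
Proof.
exists 3 => d f g q T h N ell Lf gmax Lstar Lsc hp _ TN Hf Hg Hgm _ _ Hsc HLs
  ell2 hstep k /andP[_ kN] x y.
have [<-|xy] := eqVneq x y; first by rewrite !subrr eucl_norm0 mulr0.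
have grid_time j : (j <= N)%N -> 0 <= j%:R * h <= T.
  move=> jN; apply/andP; split; first by rewrite mulr_ge0 // ltW.
  by rewrite TN ler_wpM2r ?ler_nat // ltW.
set t := k%:R * h; have tT : 0 <= t <= T := grid_time k kN.
have Tt : 0 <= T - t <= T by case/andP: tT => t0 tT; apply/andP; split; lra.
have HS : lip_eucl (score_fn q t) (Lsc (T - t)).
  by have := Hsc _ Tt; rewrite (_ : T - (T - t) = t) //; lra.
have Lf0 := lip_eucl_ge0 xy (Hf t tT); have Ls0 := lip_eucl_ge0 xy HS.
have ggm : 0 <= g t <= gmax by rewrite ltW ?Hg //= Hgm.
have [ellk|kell] := leqP ell k.
  have sT := grid_time (k - ell)%N (leq_trans (leq_subr _ _) kN).
  have hk : (2 <= ell <= k)%N by rewrite ell2 ellk.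
  have hstep_t : ell%:R * h * (Lf + gmax ^+ 2 * Lsc (T - t)) <= 1.
    apply: le_trans hstep; apply: ler_wpM2l; first by rewrite mulr_ge0 // ltW.
    by rewrite lerD2l; apply: ler_wpM2l; [exact: sqr_ge0 | exact: HLs].
  exact: (lip_sampler_drift_restore Lf0 Ls0 hk hp (Hg _ sT) ggm hstep_t
    (Hf _ tT) (Hf _ sT) HS x y).
exact: (lip_sampler_drift_euler Lf0 Ls0 kell hp ggm (Hf _ tT) HS x y).
Qed.
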